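(* Let $k$ be a field and let $X$ be a $\mathcal{T}$-space. Assume that there exist $V_n\in\mathcal{T}$, $n\in\mathbb{N}$, such that $\{V_n\}_{n\in\mathbb{N}}$ is a covering of $X$ in the site $X_{\mathcal{T}_{loc}}$, i.e. for every $W\in\mathcal{T}$ finitely many of the $V_n$ cover $W$. Let $F\in\mathrm{Mod}(k_\mathcal{T})$. Then $F$ is $\mathcal{T}$-flabby if and only if the restriction $\Gamma(X;F)\to\Gamma(U;F)$ is surjective for every $U\in\mathcal{T}_{loc}$.
   Context: Let $X$ be a topological space and $\mathcal{T}$ a family of open subsets of $X$. A $\mathcal{T}$-subset of $X$ is a finite Boolean combination of elements of $\mathcal{T}$; a $\mathcal{T}$-connected subset is a $\mathcal{T}$-subset which is not the disjoint union of two proper $\mathcal{T}$-subsets that are both open and closed in it. $X$ is a $\mathcal{T}$-space if (i) $\mathcal{T}$ is a basis of the topology of $X$ and $\emptyset\in\mathcal{T}$; (ii) $\mathcal{T}$ is closed under finite unions and finite intersections; (iii) every $U\in\mathcal{T}$ has finitely many $\mathcal{T}$-connected components. $X_\mathcal{T}$ is the site whose underlying category is $\mathcal{T}$ (morphisms are inclusions), a family $\{U_i\}\subset\mathcal{T}$ of subsets of $U\in\mathcal{T}$ being a covering of $U$ iff it admits a finite subfamily whose union is $U$; $\mathrm{Mod}(k_\mathcal{T})$ is the category of sheaves of $k$-vector spaces on $X_\mathcal{T}$. $F\in\mathrm{Mod}(k_\mathcal{T})$ is $\mathcal{T}$-flabby if for all $U,V\in\mathcal{T}$ with $U\subseteq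 V$ the restriction $\Gamma(V;F)\to\Gamma(U;F)$ is surjective. Let $\mathcal{T}_{loc}=\{U\subseteq X\text{ open}: U\cap W\in\mathcal{T}\text{ for every }W\in\mathcal{T}\}$ (note $X\in\mathcal{T}_{loc}$). $X_{\mathcal{T}_{loc}}$ is the site on $\mathcal{T}_{loc}$ where $\{U_i\}\subset\mathcal{T}_{loc}$ covers $U\in\mathcal{T}_{loc}$ iff for every $V\in\mathcal{T}$ a finite subfamily covers $U\cap V$. Every $F\in\mathrm{Mod}(k_\mathcal{T})$ extends uniquely to a sheaf on $X_{\mathcal{T}_{loc}}$, and for $U\in\mathcal{T}_{loc}$ one sets $\Gamma(U;F)=\varprojlim_{V\in\mathcal{T}}\Gamma(U\cap V;F)$. *)

From HB Require Import structures.
From mathcomp Require Import all_boot all_order all_algebra.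
From mathcomp Require Import boolp classical_sets functions cardinality topology.
Set Implicit Arguments. Unset Strict Implicit. Unset Printing Implicit Defensive.
Import GRing.Theory.
Local Open Scope classical_set_scope.
Local Open Scope ring_scope.

Section TSpaces.
Variable X : topologicalType.
Variable T : set (set X).

Inductive Tsubset : set X -> Prop :=
  | Tsub_base U : T U -> Tsubset U
  | Tsub_compl A : Tsubset A -> Tsubset (~` A)
  | Tsub_union A B : Tsubset A -> Tsubset B -> Tsubset (A `|` B)
  | Tsub_inter A B : Tsubset A -> Tsubset B -> Tsubset (A `&` B).

Definition open_in (A B : set X) := exists O, open O /\ B = A `&` O.
Definition closed_in (A B : set X) := exists C, closed C /\ B = A `&` C.

Definition Tconnected (A : set X) :=
  Tsubset A /\
  ~ (exists B C, Tsubset B /\ Tsubset C /\ B `<` A /\ C `<` A /\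
       B `&` C = set0 /\ B `|` C = A /\
       open_in A B /\ closed_in A B /\ open_in A C /\ closed_in A C).

Definition Tcomponent (U C : set X) :=
  C !=set0 /\ C `<=` U /\ Tconnected C /\
  forall D, Tconnected D -> C `<=` D -> D `<=` U -> D = C.

Definition T_space :=
  (forall U, T U -> open U) /\
  (forall O x, open O -> O x -> exists U, T U /\ U x /\ U `<=` O) /\
  T set0 /\
  (forall U V, T U -> T V -> T (U `|` V)) /\
  (forall U V, T U -> T V -> T (U `&` V)) /\
  (forall U, T U -> finite_set (Tcomponent U)).

Definition Tloc (U : set X) := open U /\ forall W, T W -> T (U `&` W).

Variable k : fieldType.

(* A sheaf of k-vector spaces on the site X_T, given by its sections F U
   (meaningful for U in T) and restriction maps res U V : F V -> F U
   (meaningful for U ⊆ V in T). *)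
Definition is_presheaf (F : set X -> lmodType k)
    (res : forall U V : set X, F V -> F U) :=
  (forall U V, T U -> T V -> U `<=` V -> linear (res U V)) /\
  (forall U, T U -> forall s, res U U s = s) /\
  (forall U V W, T U -> T V -> T W -> U `<=` V -> V `<=` W ->
     forall s, res U V (res V W s) = res U W s).

Definition is_sheaf (F : set X -> lmodType k)
    (res : forall U V : set X, F V -> F U) :=
  is_presheaf res /\
  forall (I : Type) (Ui : I -> set X) (U : set X),
    T U -> (forall i, T (Ui i)) -> (forall i, Ui i `<=` U) ->
    (exists J : set I, finite_set J /\ U = \bigcup_(i in J) Ui i) ->
    (forall s t : F U, (forall i, res (Ui i) U s = res (Ui i) U t) -> s = t) /\
    (forall si : forall i, F (Ui i),
       (forall i j, res (Ui i `&` Ui j) (Ui i) (si i) =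
                    res (Ui i `&` Ui j) (Ui j) (si j)) ->
       exists s : F U, forall i, res (Ui i) U s = si i).

Definition T_flabby (F : set X -> lmodType k)
    (res : forall U V : set X, F V -> F U) :=
  forall U V, T U -> T V -> U `<=` V -> forall t : F U, exists s : F V, res U V s = t.

(* Elements of Gamma(U;F) = lim_{V in T} Gamma(U ∩ V; F), for U in T_loc,
   represented as compatible families. *)
Definition loc_section (F : set X -> lmodType k)
    (res : forall U V : set X, F V -> F U) (U : set X)
    (t : forall V : set X, F (U `&` V)) :=
  forall V V', T V -> T V' -> V `<=` V' -> res (U `&` V) (U `&` V') (t V') = t V.

Definition restr_from_X_surjective (F : set X -> lmodType k)
    (res : forall U V : set X, F V -> F U) (U : set X) :=
  forall t : forall V : set X, F (U `&` V), loc_section res t ->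
  exists s : forall V : set X, F (setT `&` V),
    loc_section res s /\
    forall V, T V -> res (U `&` V) (setT `&` V) (s V) = t V.

End TSpaces.

From HB Require Import structures.
From mathcomp Require Import all_boot all_order all_algebra.
From mathcomp Require Import boolp classical_sets functions cardinality topology.
Local Open Scope classical_set_scope.

(* Exhaust X by the increasing sets W_n = V_0 ∪ ... ∪ V_(n-1) of T, which are
   cofinal in T by the covering hypothesis.  If F is T-flabby and t is a
   section of F over U ∈ T_loc, build inductively s_n ∈ Γ(W_n; F) with
   s_n = t on U ∩ W_n and s_(n+1) = s_n on W_n: glue s_n with t on
   W_n ∪ (U ∩ W_(n+1)) and extend to W_(n+1) by flabbiness.  The compatible
   family (s_n) is a global section restricting to t.  Conversely, for U ⊆ W
   in T, a section over U is also one over U ∈ T_loc, and the restriction to W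
   of a global lift extends it. *)

Lemma dependent_choice_nat {A : nat -> Type} {P : forall n, A n -> Prop}
    {R : forall n, A n -> A n.+1 -> Prop} :
  (exists x, P 0%N x) ->
  (forall n x, P n x -> exists y, P n.+1 y /\ R n x y) ->
  exists f : forall n, A n, forall n, P n (f n) /\ R n (f n) (f n.+1).
Proof.
move=> base step.
pose g := fix g n : {x : A n | P n x} :=
  match n return {x : A n | P n x} with
  | 0 => cid base
  | m.+1 => let h := cid (step m (proj1_sig (g m)) (proj2_sig (g m))) in
            exist _ (proj1_sig h) (proj1 (proj2_sig h))
  end.
exists (fun n => proj1_sig (g n)) => n; split; first exact: proj2_sig (g n).
exact: (proj2 (proj2_sig (cid (step n (proj1_sig (g n)) (proj2_sig (g n)))))).
Qed.

Lemma finite_set_nat_ubound (J : set nat) :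
  finite_set J -> exists N, forall j, J j -> (j <= N)%N.
Proof.
move/finite_seqP=> [s ->]; exists (\max_(j <- s) j) => j /=.
by move=> js; apply: (leq_bigmax_seq (F := id)).
Qed.

Lemma sub_bigsetU_finite_cover (X : Type) (V : nat -> set X) (A : set X) :
  (exists J : set nat, finite_set J /\ A `<=` \bigcup_(n in J) V n) ->
  exists N, A `<=` \big[setU/set0]_(i < N) V i.
Proof.
move=> [J [/finite_set_nat_ubound [N JN] AJ]]; exists N.+1.
by move=> x /AJ [j /JN jN Vjx]; apply: (bigsetU_sup (n := N.+1) _ Vjx).
Qed.

Section SheafOnT.
Variables (X : topologicalType) (T : set (set X)) (k : fieldType).
Variables (F : set X -> lmodType k) (res : forall U V : set X, F V -> F U).
Hypothesis F_sheaf : is_sheaf T res.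

Lemma res_id U (s : F U) : T U -> res U U s = s.
Proof. by move=> TU; rewrite (F_sheaf.1.2.1 U TU). Qed.

Lemma res_comp {U V W} (s : F W) : T U -> T V -> T W -> U `<=` V -> V `<=` W ->
  res U V (res V W s) = res U W s.
Proof. by move=> *; apply: F_sheaf.1.2.2. Qed.

Lemma sheaf_glue2 {A B} (a : F A) (b : F B) : T A -> T B -> T (A `|` B) ->
  res (A `&` B) A a = res (A `&` B) B b ->
  exists g : F (A `|` B), res A (A `|` B) g = a /\ res B (A `|` B) g = b.
Proof.
move=> TA TB TAB ab.
pose Ui (i : bool) := if i then A else B.
pose si (i : bool) : F (Ui i) := if i as i return F (Ui i) then a else b.
have TUi : forall i, T (Ui i) by case.
have sUi : forall i, Ui i `<=` A `|` B by case=> x; [left | right].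
have cover :
    exists J : set bool, finite_set J /\ A `|` B = \bigcup_(i in J) Ui i.
  exists [set` [:: true; false]]; split; first exact: finite_seq.
  apply/seteqP; split=> x; first by case=> ?; [exists true | exists false].
  by case=> -[] _ ?; [left | right].
have [_ glue] := F_sheaf.2 bool Ui (A `|` B) TAB TUi sUi cover.
have [g gi] : exists g : F (A `|` B), forall i, res (Ui i) (A `|` B) g = si i.
  by apply: glue => -[] -[] //=; rewrite setIC.
by exists g; split; [exact: (gi true) | exact: (gi false)].
Qed.

Hypothesis T_setU : forall {U V}, T U -> T V -> T (U `|` V).
Hypothesis T_setI : forall {U V}, T U -> T V -> T (U `&` V).

Lemma flabby_glue2 {A B W} (a : F A) (b : F B) : T_flabby T res ->
  T A -> T B -> T W -> A `<=` W -> B `<=` W ->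
  res (A `&` B) A a = res (A `&` B) B b ->
  exists w : F W, res A W w = a /\ res B W w = b.
Proof.
move=> flabby TA TB TW AW BW ab.
have TAB := T_setU TA TB.
have [g [ga gb]] := sheaf_glue2 a b TA TB TAB ab.
have ABW : A `|` B `<=` W by rewrite subUset.
have [w wg] := flabby _ _ TAB TW ABW g.
exists w; split.
- by rewrite -(res_comp w TA TAB TW (@subsetUl _ A B)) // wg.
- by rewrite -(res_comp w TB TAB TW (@subsetUr _ A B)) // wg.
Qed.

Section Exhaustion.
Hypothesis F_flabby : T_flabby T res.
Variable W : nat -> set X.
Hypothesis TW : forall n, T (W n).
Hypothesis W_nondecreasing : {homo W : n m / (n <= m)%N >-> n `<=` m}.
Hypothesis W_cofinal : forall A, T A -> exists n, A `<=` W n.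
Variable U : set X.
Hypothesis U_Tloc : Tloc T U.

Let TUI {A} : T A -> T (U `&` A) := U_Tloc.2 A.

Section Lift.
Variable t : forall V, F (U `&` V).
Hypothesis t_loc : loc_section T res t.

Lemma exhaustion_lift_step n (x : F (W n)) :
  res (U `&` W n) (W n) x = t (W n) ->
  exists y : F (W n.+1),
    res (U `&` W n.+1) (W n.+1) y = t (W n.+1) /\ res (W n) (W n.+1) y = x.
Proof.
move=> xt.
have WnS : W n `<=` W n.+1 := W_nondecreasing _ _ (leqnSn n).
have TUn := TUI (TW n); have TUS := TUI (TW n.+1).
have TI : T (W n `&` (U `&` W n.+1)) := T_setI (TW n) TUS.
have sI : W n `&` (U `&` W n.+1) `<=` U `&` W n by move=> z [? [? _]].
have agree : res (W n `&` (U `&` W n.+1)) (W n) x =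
             res (W n `&` (U `&` W n.+1)) (U `&` W n.+1) (t (W n.+1)).
  rewrite -(res_comp x TI TUn (TW n) sI (@subIsetr _ _ _)) xt.
  by rewrite -(t_loc _ _ (TW n) (TW n.+1) WnS) res_comp //; exact: setIS.
have [y [yx yt]] := flabby_glue2 x (t (W n.+1)) F_flabby (TW n) TUS
  (TW n.+1) WnS (@subIsetr _ _ _) agree.
by exists y.
Qed.

Lemma exhaustion_lifts : exists s : forall n, F (W n), forall n,
  res (U `&` W n) (W n) (s n) = t (W n) /\ res (W n) (W n.+1) (s n.+1) = s n.
Proof.
apply: (dependent_choice_nat
  (P := fun n x => res (U `&` W n) (W n) x = t (W n))
  (R := fun n x y => res (W n) (W n.+1) y = x)) => [|n x].
  exact: F_flabby (TUI (TW 0)) (TW 0) (@subIsetr _ _ _) (t (W 0)).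
exact: exhaustion_lift_step.
Qed.

Section Compatible.
Variable s : forall n, F (W n).
Hypothesis s_t : forall n, res (U `&` W n) (W n) (s n) = t (W n).
Hypothesis s_compat : forall n, res (W n) (W n.+1) (s n.+1) = s n.

Lemma res_lifts_le {n m} : (n <= m)%N -> res (W n) (W m) (s m) = s n.
Proof.
move=> /subnK <-; elim: (m - n)%N => [|d IH]; first by rewrite add0n res_id.
rewrite addSn -(res_comp _ (TW n) (TW (d + n)) (TW (d + n).+1)) ?s_compat //.
all: by apply: W_nondecreasing; rewrite ?leq_addl.
Qed.

Lemma res_lifts A n m : T A -> A `<=` W n -> A `<=` W m ->
  res A (W n) (s n) = res A (W m) (s m).
Proof.
wlog nm : n m / (n <= m)%N => [wlog_nm|TA An Am].
  by case/orP: (leq_total n m) => ? *; [|symmetry]; apply: wlog_nm.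
by rewrite -(res_lifts_le nm) res_comp //; exact: W_nondecreasing.
Qed.

Lemma global_section_of_lifts : exists S : forall V, F (setT `&` V),
  loc_section T res S /\
  forall V, T V -> res (U `&` V) (setT `&` V) (S V) = t V.
Proof.
have [N WN] : {N : set X -> nat & forall A, T A -> A `<=` W (N A)}.
  apply: (choice (P := fun A n => T A -> A `<=` W n)) => A.
  have [/W_cofinal [n An]|nTA] := pselect (T A); first by exists n.
  by exists 0%N.
have TT A : T A -> T (setT `&` A) by rewrite setTI.
have TN A : T A -> setT `&` A `<=` W (N A) by move=> /WN AN x [_ /AN].
exists (fun A => res (setT `&` A) (W (N A)) (s (N A))); split.
- move=> A A' TA TA' AA'.
  have sA : setT `&` A `<=` setT `&` A' by exact: setIS.
  rewrite (res_comp _ (TT _ TA) (TT _ TA') (TW _) sA (TN _ TA')).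
  apply: res_lifts; first exact: TT.
    exact: subset_trans sA (TN _ TA').
  exact: TN.
- move=> A TA.
  have sUA : U `&` A `<=` setT `&` A by exact: setSI.
  rewrite (res_comp _ (TUI TA) (TT _ TA) (TW _) sUA (TN _ TA)).
  have sUN : U `&` A `<=` U `&` W (N A) by apply: setIS; exact: WN.
  rewrite -(res_comp _ (TUI TA) (TUI (TW _)) (TW _) sUN (@subIsetr _ _ _)).
  by rewrite s_t (t_loc _ _ TA (TW _) (WN A TA)).
Qed.

End Compatible.
End Lift.

Lemma flabby_restr_from_X_surjective : restr_from_X_surjective T res U.
Proof.
move=> t t_loc; have [s /all_and2 [s_t s_compat]] := exhaustion_lifts t t_loc.
exact: global_section_of_lifts t_loc s s_t s_compat.
Qed.

End Exhaustion.

Hypothesis T_open : forall U, T U -> open U.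

Lemma Tloc_of_T U : T U -> Tloc T U.
Proof. by move=> TU; split=> [|A TA]; [exact: T_open | exact: T_setI]. Qed.

Lemma flabby_of_restr_from_X_surjective :
  (forall U, T U -> restr_from_X_surjective T res U) -> T_flabby T res.
Proof.
move=> surj U W TU TW UW u.
have u_loc : loc_section T res (fun V => res (U `&` V) U u).
  move=> V V' TV TV' VV'.
  by rewrite (res_comp _ (T_setI TU TV) (T_setI TU TV') TU (setIS VV')
    (@subIsetl _ _ _)).
have [s [_ su]] := surj U TU _ u_loc.
have TTW : T (setT `&` W) by rewrite setTI.
have TUW := T_setI TU TW.
have UUW : U `<=` U `&` W by move=> x Ux; split=> //; exact: UW.
have sW : U `&` W `<=` setT `&` W by exact: setSI.
exists (res W (setT `&` W) (s W)).
by rewrite res_comp // -(res_comp _ TU TUW TTW UUW sW) su // res_comp // res_id.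
Qed.

End SheafOnT.

Theorem mainTheorem19 (k : fieldType) (X : topologicalType) (T : set (set X))
  (HT : T_space T)
  (V : nat -> set X) (HV : forall n, T (V n))
  (Hcov : forall W, T W ->
     exists J : set nat, finite_set J /\ W `<=` \bigcup_(n in J) V n)
  (F : set X -> lmodType k) (res : forall U W : set X, F W -> F U)
  (HF : is_sheaf T res) :
  T_flabby T res <-> (forall U, Tloc T U -> restr_from_X_surjective T res U).
Proof.
have [T_open [_ [T_set0 [T_setU [T_setI _]]]]] := HT.
split=> [flabby | surj].
  apply: (@flabby_restr_from_X_surjective _ _ _ _ _ HF T_setU T_setI flabby
            (fun n => \big[setU/set0]_(i < n) V i)).
  - by move=> n; apply: big_ind => // i _; exact: HV.
  - exact: subset_bigsetU.
  - by move=> A /Hcov /sub_bigsetU_finite_cover.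
apply: (@flabby_of_restr_from_X_surjective _ _ _ _ _ HF T_setI) => U TU.
exact/surj/(@Tloc_of_T _ _ T_setI T_open).
Qed.
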